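(* There exist continuous functions $g_1,g_2,g_3,g_4:\mathrm{SO}(4)\to S^3\times S^3$ such that for every rotation $R\in\mathrm{SO}(4)$, $\mathbf{R}_{QQ}(g_i(R))=R$ for some $i\in\{1,2,3,4\}$.
   Context: Identify $\mathbb{R}^4$ with the quaternions via $(w,x,y,z)\leftrightarrow w+x\mathbf{i}+y\mathbf{j}+z\mathbf{k}$; $S^3$ is the set of unit quaternions. For $(\mathbf{q}_L,\mathbf{q}_R)\in S^3\times S^3$, $\mathbf{R}_{QQ}(\mathbf{q}_L,\mathbf{q}_R)\in\mathrm{SO}(4)$ is the rotation $\mathbf{p}\mapsto\mathbf{q}_L\mathbf{p}\mathbf{q}_R$ of $\mathbb{R}^4$. *)

From HB Require Import structures.
From mathcomp Require Import all_boot all_order all_algebra.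
From mathcomp Require Import all_classical all_reals all_analysis.
Set Implicit Arguments. Unset Strict Implicit. Unset Printing Implicit Defensive.
Import Order.TTheory GRing.Theory Num.Theory.
Import numFieldNormedType.Exports.
Local Open Scope classical_set_scope.
Local Open Scope ring_scope.

(* Quaternions: R^4 as row vectors 'rV[R]_4, (w,x,y,z) <-> w + x i + y j + z k,
   coordinate k of p is p 0 k with k = 0,1,2,3. *)
Definition qco (R : realType) (p : 'rV[R]_4) (k : nat) : R := p 0 (inord k).

Definition qmul (R : realType) (p q : 'rV[R]_4) : 'rV[R]_4 :=
  let a1 := qco p 0 in let b1 := qco p 1 in let c1 := qco p 2 in let d1 := qco p 3 in
  let a2 := qco q 0 in let b2 := qco q 1 in let c2 := qco q 2 in let d2 := qco q 3 in
  \row_(k < 4)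
    match val k with
    | 0%N => a1 * a2 - b1 * b2 - c1 * c2 - d1 * d2
    | 1%N => a1 * b2 + b1 * a2 + c1 * d2 - d1 * c2
    | 2%N => a1 * c2 - b1 * d2 + c1 * a2 + d1 * b2
    | _ => a1 * d2 + b1 * c2 - c1 * b2 + d1 * a2
    end.

Definition S3 (R : realType) : set 'rV[R]_4 :=
  [set p | \sum_(k < 4) p 0 k ^+ 2 = 1].

Definition SO4 (R : realType) : set 'M[R]_4 :=
  [set M | M^T *m M = 1%:M /\ \det M = 1].

Definition qe (R : realType) (j : 'I_4) : 'rV[R]_4 := \row_(k < 4) (k == j)%:R.

(* R_QQ(qL,qR): matrix (acting on column vectors) of p |-> qL p qR;
   column j is the image of the j-th standard basis vector. *)
Definition RQQ (R : realType) (qL qR : 'rV[R]_4) : 'M[R]_4 :=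
  \matrix_(i < 4, j < 4) (qmul (qmul qL (qe R j)) qR) 0 i.

Arguments S3 R : clear implicits.
Arguments SO4 R : clear implicits.

From HB Require Import structures.
From mathcomp Require Import all_boot all_order all_algebra.
From mathcomp Require Import all_classical all_reals all_analysis.
From mathcomp Require Import ring lra.
Import Order.TTheory GRing.Theory Num.Theory.
Import numFieldNormedType.Exports.
Set Implicit Arguments. Unset Strict Implicit. Unset Printing Implicit Defensive.
Local Open Scope classical_set_scope.
Local Open Scope ring_scope.

(* Every M in SO(4) is R_QQ(a, b) with a, b unit quaternions.  The associate matrix
   K(M) = (<R_QQ(e_k, e_l), M> / 4)_(k,l) equals a b^T when M = R_QQ(a, b); for M in SO(4)
   it has Frobenius norm 1 and rank one, because each 2 x 2 minor of K(M) is a linear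
   combination of the orthonormality relations of M and of Jacobi's identities between
   complementary 2 x 2 minors (M is its own cofactor matrix).
   Column 0 of K(M) is b_0 a, and v = b_0 a, w = conj(v) M(1) give back (a, b) up to a
   common sign after normalisation.  For a chart that is continuous on all of SO(4), v is
   replaced by a (b_0 + t Im b) with t = max (1/4 - b_0^2) 0: this is still computable from
   K(M), never zero, and equal to b_0 a where b_0^2 >= 1/4.  Since the b_i^2 sum to 1,
   some b_i^2 >= 1/4, and the i-th chart first multiplies M by R_QQ(1, conj e_i), which
   moves b_i into the real part. *)

#[local] Arguments qco [R] p k%_N.

Section SO4Charts.
Variable R : realType.
Implicit Types (a b c p x y : 'rV[R]_4) (s t : R) (M N : 'M[R]_4).

Local Notation "''q_' n" := (qe R (@inord 3 n%N)) (at level 8, n at level 2, format "''q_' n").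
Local Notation "M `[ i , j ]" := (M (@inord 3 i%N) (@inord 3 j%N)) (at level 10).

Definition quat (x0 x1 x2 x3 : R) : 'rV[R]_4 :=
  \row_(k < 4) match val k with 0 => x0 | 1 => x1 | 2 => x2 | _ => x3 end%N.

Lemma qco_quat (x0 x1 x2 x3 : R) k :
  qco (quat x0 x1 x2 x3) k = match k with 1 => x1 | 2 => x2 | 3 => x3 | _ => x0 end%N.
Proof.
rewrite /qco mxE /=; case: (ltnP k 4) => [k4|k4].
  by rewrite inordK //; case: k k4 => [|[|[|[|]]]].
by rewrite /inord /insubd insubN ?ltnNge ?k4 //; case: k k4 => [|[|[|[|]]]].
Qed.

Lemma quat_eta a : a = quat (qco a 0) (qco a 1) (qco a 2) (qco a 3).
Proof.
apply/rowP => k; rewrite mxE /qco.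
by case: k => [[|[|[|[|//]]]] ?]; congr (a 0 _); apply: val_inj; rewrite /= inordK.
Qed.

Lemma quatP a b : qco a 0 = qco b 0 -> qco a 1 = qco b 1 -> qco a 2 = qco b 2 ->
  qco a 3 = qco b 3 -> a = b.
Proof. by move=> e0 e1 e2 e3; rewrite [a]quat_eta [b]quat_eta e0 e1 e2 e3. Qed.

Lemma qmulE a b : qmul a b = quat
  (qco a 0 * qco b 0 - qco a 1 * qco b 1 - qco a 2 * qco b 2 - qco a 3 * qco b 3)
  (qco a 0 * qco b 1 + qco a 1 * qco b 0 + qco a 2 * qco b 3 - qco a 3 * qco b 2)
  (qco a 0 * qco b 2 - qco a 1 * qco b 3 + qco a 2 * qco b 0 + qco a 3 * qco b 1)
  (qco a 0 * qco b 3 + qco a 1 * qco b 2 - qco a 2 * qco b 1 + qco a 3 * qco b 0).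
Proof. by []. Qed.

Lemma qcoM a b k : qco (qmul a b) k = match k with
  | 1 => qco a 0 * qco b 1 + qco a 1 * qco b 0 + qco a 2 * qco b 3 - qco a 3 * qco b 2
  | 2 => qco a 0 * qco b 2 - qco a 1 * qco b 3 + qco a 2 * qco b 0 + qco a 3 * qco b 1
  | 3 => qco a 0 * qco b 3 + qco a 1 * qco b 2 - qco a 2 * qco b 1 + qco a 3 * qco b 0
  | _ => qco a 0 * qco b 0 - qco a 1 * qco b 1 - qco a 2 * qco b 2 - qco a 3 * qco b 3
  end.
Proof. by rewrite qmulE qco_quat. Qed.

Lemma qeE (j : 'I_4) : qe R j = quat (0 == j)%N%:R (1 == j)%N%:R (2 == j)%N%:R (3 == j)%N%:R.
Proof. by apply/rowP => k; rewrite !mxE; case: k => [[|[|[|[|//]]]] ?]. Qed.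

Lemma qcoD a b k : qco (a + b) k = qco a k + qco b k. Proof. by rewrite /qco mxE. Qed.
Lemma qcoN a k : qco (- a) k = - qco a k. Proof. by rewrite /qco mxE. Qed.
Lemma qcoZ s a k : qco (s *: a) k = s * qco a k. Proof. by rewrite /qco mxE. Qed.

(* Expanding one [qco (qmul a b) k] at a time with [qcoM], rather than [qmul] as a whole
   with [qmulE], keeps the terms small. *)
Ltac qcoords := repeat progress rewrite ?qcoD ?qcoN ?qcoZ ?qcoM ?qeE ?qco_quat /= ?inordK //=.

Definition qconj a := quat (qco a 0) (- qco a 1) (- qco a 2) (- qco a 3).

Definition qnorm2 a := qco a 0 ^+ 2 + qco a 1 ^+ 2 + qco a 2 ^+ 2 + qco a 3 ^+ 2.

Lemma sum4 (F : 'I_4 -> R) :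
  \sum_(k < 4) F k = F (inord 0) + F (inord 1) + F (inord 2) + F (inord 3).
Proof.
rewrite !big_ord_recl big_ord0 addr0 !addrA.
by congr (_ + _ + _ + _); congr F; apply: val_inj; rewrite /= inordK.
Qed.

Lemma S3E a : S3 R a <-> qnorm2 a = 1.
Proof. by rewrite /S3 /= sum4. Qed.

Lemma qnorm2M a b : qnorm2 (qmul a b) = qnorm2 a * qnorm2 b.
Proof. by rewrite /qnorm2; qcoords; ring. Qed.

Lemma qnorm2Z s a : qnorm2 (s *: a) = s ^+ 2 * qnorm2 a.
Proof. by rewrite /qnorm2; qcoords; ring. Qed.

Lemma qnorm2_conj a : qnorm2 (qconj a) = qnorm2 a.
Proof. by rewrite /qnorm2 /qconj; qcoords; ring. Qed.

Lemma qnorm2_qe (i : 'I_4) : qnorm2 (qe R i) = 1.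
Proof. by rewrite /qnorm2; case: i => [[|[|[|[|//]]]] ?]; qcoords; ring. Qed.

Lemma mul1q a : qmul 'q_0 a = a.
Proof. by apply: quatP; qcoords; ring. Qed.

Lemma mulq1 a : qmul a 'q_0 = a.
Proof. by apply: quatP; qcoords; ring. Qed.

Lemma qmulA a b c : qmul a (qmul b c) = qmul (qmul a b) c.
Proof. by apply: quatP; qcoords; ring. Qed.

Lemma qmulZl s a b : qmul (s *: a) b = s *: qmul a b.
Proof. by apply: quatP; qcoords; ring. Qed.

Lemma qmulZr s a b : qmul a (s *: b) = s *: qmul a b.
Proof. by apply: quatP; qcoords; ring. Qed.

Lemma qmul_conjl a : qmul (qconj a) a = qnorm2 a *: 'q_0.
Proof. by apply: quatP; rewrite /qconj /qnorm2; qcoords; ring. Qed.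

Lemma qmul_conjM_mul a b c :
  qmul (qconj (qmul a c)) (qmul a b) = qnorm2 a *: qmul (qconj c) b.
Proof. by apply: quatP; rewrite /qconj /qnorm2; qcoords; ring. Qed.

Lemma qco0_mul_conj_qe b (i : 'I_4) : qco (qmul b (qconj (qe R i))) 0 = qco b i.
Proof. by case: i => [[|[|[|[|//]]]] ?]; rewrite /qconj; qcoords; ring. Qed.

Lemma S3_mul a b : S3 R a -> S3 R b -> S3 R (qmul a b).
Proof. by move=> /S3E a1 /S3E b1; apply/S3E; rewrite qnorm2M a1 b1 mulr1. Qed.

Lemma S3_conj a : S3 R a -> S3 R (qconj a).
Proof. by move=> /S3E a1; apply/S3E; rewrite qnorm2_conj. Qed.

Lemma S3_qe (i : 'I_4) : S3 R (qe R i).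
Proof. exact/S3E/qnorm2_qe. Qed.

Lemma S3_normalize v w : 0 < qnorm2 v -> qnorm2 w = qnorm2 v ->
  S3 R ((Num.sqrt (qnorm2 v))^-1 *: w).
Proof.
move=> v0 wv; apply/S3E.
by rewrite qnorm2Z exprVn sqr_sqrtr ?ltW // wv mulVf // gt_eqF.
Qed.

(** * The matrices R_QQ(a, b) *)

Lemma RQQE a b (i j : nat) : (RQQ a b)`[i, j] = qco (qmul (qmul a 'q_j) b) i.
Proof. by rewrite mxE. Qed.

Lemma RQQ_col a b (j : 'I_4) : (col j (RQQ a b))^T = qmul (qmul a (qe R j)) b.
Proof. by apply/rowP => i; rewrite !mxE. Qed.

Lemma trmx_qcoE p k : p^T (inord k) 0 = qco p k.
Proof. by rewrite mxE. Qed.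

Lemma RQQ_act a b p : RQQ a b *m p^T = (qmul (qmul a p) b)^T.
Proof.
apply/colP => i; rewrite -(inord_val i) !trmx_qcoE mxE sum4 !trmx_qcoE.
by case: i => [[|[|[|[|//]]]] ?] /=; rewrite !RQQE; qcoords; ring.
Qed.

Lemma RQQ_mul x y a b : RQQ x y *m RQQ a b = RQQ (qmul x a) (qmul b y).
Proof.
apply: trmx_inj; apply/row_matrixP => j.
rewrite trmx_mul row_mul -!tr_col !RQQ_col -[_ *m _]trmxK trmx_mul trmxK RQQ_act.
by rewrite trmxK !qmulA.
Qed.

Lemma RQQ1 : RQQ 'q_0 'q_0 = 1%:M.
Proof. by apply/matrixP => i j; rewrite [LHS]mxE mul1q mulq1 !mxE. Qed.

Lemma RQQZ s t a b : RQQ (s *: a) (t *: b) = (s * t) *: RQQ a b.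
Proof. by apply/matrixP => i j; rewrite [LHS]mxE !qmulZl qmulZr !mxE mulrA. Qed.

Lemma mx4P M N : (forall i j, (i < 4)%N -> (j < 4)%N -> M`[i, j] = N`[i, j]) -> M = N.
Proof. by move=> MN; apply/matrixP => i j; rewrite -(inord_val i) -(inord_val j) MN. Qed.

(* assoc M k l = <RQQ e_k e_l, M> / 4 for the Frobenius product: the coordinates of M in
   the orthogonal basis (RQQ e_k e_l)_(k,l) of the 4 x 4 matrices. *)
Definition assoc M (k l : nat) : R :=
  match k, l with
  | 0, 0 => 4^-1 * (M`[0, 0] + M`[1, 1] + M`[2, 2] + M`[3, 3])
  | 0, 1 => 4^-1 * (- M`[0, 1] + M`[1, 0] + M`[2, 3] - M`[3, 2])
  | 0, 2 => 4^-1 * (- M`[0, 2] - M`[1, 3] + M`[2, 0] + M`[3, 1])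
  | 0, 3 => 4^-1 * (- M`[0, 3] + M`[1, 2] - M`[2, 1] + M`[3, 0])
  | 1, 0 => 4^-1 * (- M`[0, 1] + M`[1, 0] - M`[2, 3] + M`[3, 2])
  | 1, 1 => 4^-1 * (- M`[0, 0] - M`[1, 1] + M`[2, 2] + M`[3, 3])
  | 1, 2 => 4^-1 * (M`[0, 3] - M`[1, 2] - M`[2, 1] + M`[3, 0])
  | 1, 3 => 4^-1 * (- M`[0, 2] - M`[1, 3] - M`[2, 0] - M`[3, 1])
  | 2, 0 => 4^-1 * (- M`[0, 2] + M`[1, 3] + M`[2, 0] - M`[3, 1])
  | 2, 1 => 4^-1 * (- M`[0, 3] - M`[1, 2] - M`[2, 1] - M`[3, 0])
  | 2, 2 => 4^-1 * (- M`[0, 0] + M`[1, 1] - M`[2, 2] + M`[3, 3])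
  | 2, 3 => 4^-1 * (M`[0, 1] + M`[1, 0] - M`[2, 3] - M`[3, 2])
  | 3, 0 => 4^-1 * (- M`[0, 3] - M`[1, 2] + M`[2, 1] + M`[3, 0])
  | 3, 1 => 4^-1 * (M`[0, 2] - M`[1, 3] + M`[2, 0] - M`[3, 1])
  | 3, 2 => 4^-1 * (- M`[0, 1] - M`[1, 0] - M`[2, 3] - M`[3, 2])
  | _, _ => 4^-1 * (- M`[0, 0] + M`[1, 1] + M`[2, 2] - M`[3, 3])
  end.

Arguments assoc : simpl never.

Lemma assoc_RQQ a b k l : (k < 4)%N -> (l < 4)%N -> assoc (RQQ a b) k l = qco a k * qco b l.
Proof.
by case: k => [|[|[|[|//]]]] _; case: l => [|[|[|[|//]]]] _;
  rewrite /assoc !RQQE; qcoords; field.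
Qed.

Lemma RQQ_assoc a b M :
  (forall k l, (k < 4)%N -> (l < 4)%N -> qco a k * qco b l = assoc M k l) -> RQQ a b = M.
Proof.
move=> abM; apply: mx4P => i j.
move: (abM 0 0) (abM 0 1) (abM 0 2) (abM 0 3) (abM 1 0) (abM 1 1) (abM 1 2) (abM 1 3)
  (abM 2 0) (abM 2 1) (abM 2 2) (abM 2 3) (abM 3 0) (abM 3 1) (abM 3 2) (abM 3 3).
rewrite /assoc /= => /(_ isT isT) ? /(_ isT isT) ? /(_ isT isT) ? /(_ isT isT) ?
  /(_ isT isT) ? /(_ isT isT) ? /(_ isT isT) ? /(_ isT isT) ?
  /(_ isT isT) ? /(_ isT isT) ? /(_ isT isT) ? /(_ isT isT) ?
  /(_ isT isT) ? /(_ isT isT) ? /(_ isT isT) ? /(_ isT isT) ?.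
by case: i => [|[|[|[|//]]]] _; case: j => [|[|[|[|//]]]] _; rewrite RQQE; qcoords; lra.
Qed.

(** * Complementary minors of a rotation *)

Lemma lift_inord (i m : nat) : (i < 4)%N -> (m < 3)%N ->
  lift (@inord 3 i) (@inord 2 m) = inord (bump i m).
Proof.
move=> hi hm; apply: val_inj; rewrite /= !inordK //.
by rewrite /bump; case: (i <= m)%N; rewrite ?add1n ?add0n // ltnW.
Qed.

Definition det3 (f : nat -> nat -> R) : R :=
  f 0%N 0%N * (f 1%N 1%N * f 2%N 2%N - f 1%N 2%N * f 2%N 1%N)
  - f 0%N 1%N * (f 1%N 0%N * f 2%N 2%N - f 1%N 2%N * f 2%N 0%N)
  + f 0%N 2%N * (f 1%N 0%N * f 2%N 1%N - f 1%N 1%N * f 2%N 0%N).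

Lemma det3E (A : 'M[R]_3) : \det A = det3 (fun m n => A (inord m) (inord n)).
Proof.
have E : A = \matrix_(m, n) A (inord m) (inord n).
  by apply/matrixP => m n; rewrite mxE !inord_val.
rewrite [in LHS]E (expand_det_row _ ord0) !big_ord_recl big_ord0 /cofactor.
rewrite !(expand_det_row _ ord0) !big_ord_recl !big_ord0 /cofactor !det_mx11 !mxE /=.
by rewrite /det3 /bump /= ?(addn0, add0n, add1n); ring.
Qed.

Lemma eq_det3 (f g : nat -> nat -> R) :
  (forall m n, (m < 3)%N -> (n < 3)%N -> f m n = g m n) -> det3 f = det3 g.
Proof. by move=> fg; rewrite /det3 !fg. Qed.

Definition cof4 M (i j : nat) : R :=
  (-1) ^+ (i + j) * det3 (fun m n => M`[bump i m, bump j n]).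

Lemma cofactor4E M (i j : nat) : (i < 4)%N -> (j < 4)%N ->
  cofactor M (inord i) (inord j) = cof4 M i j.
Proof.
move=> hi hj; rewrite /cofactor det3E /cof4 !inordK //; congr (_ * _).
by apply: eq_det3 => m n hm hn; rewrite !mxE !lift_inord.
Qed.

Lemma det4E M : \det M = \sum_(j < 4) M`[0, j] * cof4 M 0 j.
Proof.
rewrite (expand_det_row _ (inord 0)); apply: eq_bigr => j _.
by rewrite -{1 2}(inord_val j) cofactor4E.
Qed.

Definition minor2 M (i j k l : nat) : R := M`[i, k] * M`[j, l] - M`[i, l] * M`[j, k].

Definition compl2 (i j : nat) : nat * nat :=
  match i, j with
  | 0, 1 => (2, 3) | 0, 2 => (1, 3) | 0, 3 => (1, 2)
  | 1, 2 => (0, 3) | 1, 3 => (0, 2) | _, _ => (0, 1)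
  end%N.

Lemma cof4_minor2 M (i j k l : nat) : (i < j < 4)%N -> (k < l < 4)%N ->
  cof4 M i k * cof4 M j l - cof4 M i l * cof4 M j k =
  (-1) ^+ (i + j + k + l) * \det M *
  minor2 M (compl2 i j).1 (compl2 i j).2 (compl2 k l).1 (compl2 k l).2.
Proof.
rewrite det4E !big_ord_recl big_ord0 => /andP[ij j4] /andP[kl l4].
move: j4 ij l4 kl; case: j => [|[|[|[|j]]]]; case: i => [|[|[|[|i]]]];
  case: l => [|[|[|[|l]]]]; case: k => [|[|[|[|k]]]] => /= ? ? ? ? //;
  by rewrite /cof4 /det3 /minor2 /bump /= ?(addn0, add0n, add1n); ring.
Qed.

Lemma eq_inord4 i j : (i < 4)%N -> (j < 4)%N -> (@inord 3 i == inord j) = (i == j).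
Proof. by move=> hi hj; rewrite -(inj_eq val_inj) /= !inordK. Qed.

Lemma SO4_col_dot M i j : SO4 R M -> (i < 4)%N -> (j < 4)%N ->
  M`[0, i] * M`[0, j] + M`[1, i] * M`[1, j] + M`[2, i] * M`[2, j] + M`[3, i] * M`[3, j]
  = (i == j)%:R.
Proof.
move=> [MtM _] hi hj; have := congr1 (fun A : 'M[R]_4 => A`[i, j]) MtM.
by rewrite /= !mxE sum4 eq_inord4 // => <-; rewrite !mxE.
Qed.

Lemma SO4_row_dot M i j : SO4 R M -> (i < 4)%N -> (j < 4)%N ->
  M`[i, 0] * M`[j, 0] + M`[i, 1] * M`[j, 1] + M`[i, 2] * M`[j, 2] + M`[i, 3] * M`[j, 3]
  = (i == j)%:R.
Proof.
move=> [/mulmx1C MMt _] hi hj; have := congr1 (fun A : 'M[R]_4 => A`[i, j]) MMt.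
by rewrite /= !mxE sum4 eq_inord4 // => <-; rewrite !mxE.
Qed.

Lemma SO4_cofactor M i j : SO4 R M -> (i < 4)%N -> (j < 4)%N -> M`[i, j] = cof4 M i j.
Proof.
move=> [MtM detM] hi hj.
have adjM : \adj M = M^T by rewrite -[\adj M]mul1mx -MtM -mulmxA mul_mx_adj detM mulmx1.
have := congr1 (fun A : 'M[R]_4 => A`[j, i]) adjM.
by rewrite !mxE cofactor4E // => ->.
Qed.

Lemma SO4_minor2 M i j k l : SO4 R M -> (i < j < 4)%N -> (k < l < 4)%N ->
  minor2 M i j k l =
  (-1) ^+ (i + j + k + l) * minor2 M (compl2 i j).1 (compl2 i j).2 (compl2 k l).1 (compl2 k l).2.
Proof.
move=> HM /andP[ij j4] /andP[kl l4].
have i4 := ltn_trans ij j4; have k4 := ltn_trans kl l4.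
rewrite {1}/minor2 !SO4_cofactor // cof4_minor2 ?ij ?kl //.
by case: HM => _ ->; rewrite mulr1.
Qed.

Arguments SO4_minor2 M i%_N j%_N k%_N l%_N : clear implicits.

(** * Every rotation is some R_QQ(a, b) *)

(* Let x = k xor k' and y = l xor l' (so that e_k e_k' = +-e_x).  Sixteen times the minor
   of [assoc M] with rows {k, k'} and columns {l, l'} is a signed sum of the
   complementary-minor identities of M for rows {0, x} and columns {0, y} or their
   complement, the same with x and y swapped, and the orthonormality relations between
   columns (rows) i and i xor x xor y.  The tactic puts exactly these into the goal. *)
Ltac add_relations M HM :=
  lazymatch goal with |- assoc _ ?k ?l * assoc _ ?k' ?l' = _ =>
    let x := eval compute in (Nat.lxor k k') in
    let y := eval compute in (Nat.lxor l l') in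
    let z := eval compute in (Nat.lxor x y) in
    have := SO4_minor2 M 0 x 0 y HM isT isT;
    have := SO4_minor2 M 0 x (compl2 0 y).1 (compl2 0 y).2 HM isT isT;
    have := SO4_minor2 M 0 y 0 x HM isT isT;
    have := SO4_minor2 M 0 y (compl2 0 x).1 (compl2 0 x).2 HM isT isT;
    lazymatch z with
    | 0%N =>
      have := @SO4_col_dot M 0 0 HM isT isT; have := @SO4_col_dot M 1 1 HM isT isT;
      have := @SO4_col_dot M 2 2 HM isT isT; have := @SO4_col_dot M 3 3 HM isT isT;
      have := @SO4_row_dot M 0 0 HM isT isT; have := @SO4_row_dot M 1 1 HM isT isT;
      have := @SO4_row_dot M 2 2 HM isT isT; have := @SO4_row_dot M 3 3 HM isT isT
    | _ =>
      have := @SO4_col_dot M 0 z HM isT isT;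
      have := @SO4_col_dot M (compl2 0 z).1 (compl2 0 z).2 HM isT isT;
      have := @SO4_row_dot M 0 z HM isT isT;
      have := @SO4_row_dot M (compl2 0 z).1 (compl2 0 z).2 HM isT isT
    end
  end.

Lemma SO4_assoc_rank1_lt M k k' l l' : SO4 R M -> (k < k' < 4)%N -> (l < l' < 4)%N ->
  assoc M k l * assoc M k' l' = assoc M k l' * assoc M k' l.
Proof.
move=> HM /andP[kk' k'4] /andP[ll' l'4]; move: k'4 kk' l'4 ll'.
case: k' => [|[|[|[|?]]]]; case: k => [|[|[|[|?]]]]; case: l' => [|[|[|[|?]]]];
  case: l => [|[|[|[|?]]]] => //= _ _ _ _.
all: by add_relations M HM; rewrite /minor2 /assoc /=; lra.
Qed.

Lemma SO4_assoc_rank1 M : SO4 R M -> forall k k' l l',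
  (k < 4)%N -> (k' < 4)%N -> (l < 4)%N -> (l' < 4)%N ->
  assoc M k l * assoc M k' l' = assoc M k l' * assoc M k' l.
Proof.
move=> HM k k' l l' k4 k'4 l4 l'4.
have rank1 := @SO4_assoc_rank1_lt M _ _ _ _ HM.
have [kk'|k'k|<-] := ltngtP k k'; last by rewrite mulrC.
- have [ll'|l'l|<-] := ltngtP l l' => //.
    by rewrite rank1 ?kk' ?ll'.
  by rewrite (rank1 k k' l' l) ?kk' ?l'l.
- have [ll'|l'l|<-] := ltngtP l l' => //.
    by rewrite mulrC [RHS]mulrC (rank1 k' k l l') ?k'k ?ll'.
  by rewrite mulrC (rank1 k' k l' l) ?k'k ?l'l // mulrC.
Qed.

Lemma SO4_assoc_norm M : SO4 R M -> \sum_(k < 4) \sum_(l < 4) assoc M k l ^+ 2 = 1.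
Proof.
move=> HM; rewrite !sum4 !inordK //.
have := @SO4_col_dot M 0 0 HM isT isT; have := @SO4_col_dot M 1 1 HM isT isT.
have := @SO4_col_dot M 2 2 HM isT isT; have := @SO4_col_dot M 3 3 HM isT isT.
by rewrite /assoc /=; lra.
Qed.

Lemma rank1_factor (K : nat -> nat -> R) :
  (forall k k' l l', (k < 4)%N -> (k' < 4)%N -> (l < 4)%N -> (l' < 4)%N ->
     K k l * K k' l' = K k l' * K k' l) ->
  \sum_(k < 4) \sum_(l < 4) K k l ^+ 2 = 1 ->
  exists a b, [/\ S3 R a, S3 R b &
    forall k l, (k < 4)%N -> (l < 4)%N -> qco a k * qco b l = K k l].
Proof.
move=> minorK normK.
pose s (l : nat) := \sum_(k < 4) K k l ^+ 2.
have s_ge0 l : 0 <= s l by apply: sumr_ge0 => k _; exact: sqr_ge0.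
have [l sl0] : exists l : 'I_4, 0 < s l.
  have : \sum_(l < 4) s l != 0 by rewrite exchange_big normK oner_neq0.
  rewrite psumr_neq0 => [/hasP[l _ /andP[_ sl]]|l _ //].
  by exists l.
pose r := Num.sqrt (s l).
have rr : r ^+ 2 = s l by rewrite sqr_sqrtr ?ltW.
have r0 : r != 0 by rewrite sqrtr_eq0 -ltNge.
pose a := \row_(k < 4) (K k l / r).
pose b := \row_(m < 4) ((\sum_(j < 4) K j l * K j m) / r).
have ab k m : (k < 4)%N -> (m < 4)%N -> qco a k * qco b m = K k m.
  move=> k4 m4; rewrite /qco !mxE !inordK // mulf_div -expr2 rr mulr_sumr.
  under eq_bigr => j _ do rewrite mulrCA (minorK k j l m) // mulrCA -expr2.
  by rewrite -mulr_sumr mulfK // gt_eqF.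
have Sa : \sum_(k < 4) a 0 k ^+ 2 = 1.
  under eq_bigr => k _ do rewrite mxE expr_div_n.
  by rewrite -mulr_suml rr divff // gt_eqF.
exists a, b; split => //.
rewrite /S3 /= -normK -[LHS]mul1r -Sa mulr_sumr.
under eq_bigr => m _ do rewrite mulr_suml.
rewrite exchange_big; apply: eq_bigr => k _; apply: eq_bigr => m _.
by rewrite -exprMn -(ab k m) // /qco !inord_val.
Qed.

Lemma SO4_RQQ_surj M : SO4 R M -> exists a b, [/\ S3 R a, S3 R b & RQQ a b = M].
Proof.
move=> HM; have [a [b [Sa Sb abK]]] := rank1_factor (SO4_assoc_rank1 HM) (SO4_assoc_norm HM).
by exists a, b; split => //; exact: RQQ_assoc.
Qed.

(** * A chart inverting R_QQ where the real part of b is large *)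

Definition assoc_col M (l : nat) : 'rV[R]_4 :=
  quat (assoc M 0 l) (assoc M 1 l) (assoc M 2 l) (assoc M 3 l).

Definition vscale t b := quat (qco b 0) (t * qco b 1) (t * qco b 2) (t * qco b 3).

Definition tilt M := Num.max (4^-1 - qnorm2 (assoc_col M 0)) 0.

Definition chart_v M := assoc_col M 0 +
  tilt M *: (qmul (assoc_col M 1) 'q_1 + qmul (assoc_col M 2) 'q_2 + qmul (assoc_col M 3) 'q_3).

Definition chart_w M := qmul (qconj (chart_v M)) (col (inord 0) M)^T.

Definition chart M :=
  let s := (Num.sqrt (qnorm2 (chart_v M)))^-1 in (s *: chart_v M, s *: chart_w M).

Lemma assoc_col_RQQ a b l : (l < 4)%N -> assoc_col (RQQ a b) l = qco b l *: a.
Proof.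
move=> l4; rewrite [a in RHS]quat_eta /assoc_col !assoc_RQQ //.
by apply: quatP; qcoords; ring.
Qed.

Lemma qnorm2_vscale t b :
  qnorm2 (vscale t b) = qco b 0 ^+ 2 + t ^+ 2 * (qnorm2 b - qco b 0 ^+ 2).
Proof. by rewrite /qnorm2 /vscale; qcoords; ring. Qed.

Lemma tilt_norm_gt0 (x : R) : x ^+ 2 <= 1 ->
  0 < x ^+ 2 + Num.max (4^-1 - x ^+ 2) 0 ^+ 2 * (1 - x ^+ 2).
Proof.
move=> x1; have x0 := sqr_ge0 x.
have [x4|x4] := lerP 4^-1 (x ^+ 2).
  by rewrite max_r ?subr_le0 // expr0n mul0r addr0; apply: lt_le_trans x4.
rewrite max_l ?subr_ge0 ?ltW //; apply: ltr_wpDl => //.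
by apply: mulr_gt0; [apply: exprn_gt0 | ]; rewrite subr_gt0 //; apply: lt_le_trans x4 _; lra.
Qed.

Section ChartOfRQQ.
Variables a b : 'rV[R]_4.
Hypotheses (Sa : S3 R a) (Sb : S3 R b).

Lemma tilt_RQQ : tilt (RQQ a b) = Num.max (4^-1 - qco b 0 ^+ 2) 0.
Proof. by move/S3E: Sa => a1; rewrite /tilt assoc_col_RQQ // qnorm2Z a1 mulr1. Qed.

Lemma chart_v_RQQ : chart_v (RQQ a b) = qmul a (vscale (tilt (RQQ a b)) b).
Proof.
rewrite /chart_v !assoc_col_RQQ //; move: (tilt _) => t.
by apply: quatP; rewrite /vscale; qcoords; ring.
Qed.

Lemma chart_w_RQQ : chart_w (RQQ a b) = qmul (qconj (vscale (tilt (RQQ a b)) b)) b.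
Proof.
move/S3E: Sa => a1.
by rewrite /chart_w chart_v_RQQ RQQ_col mulq1 qmul_conjM_mul a1 scale1r.
Qed.

Lemma qnorm2_chart_v : qnorm2 (chart_v (RQQ a b)) = qnorm2 (vscale (tilt (RQQ a b)) b).
Proof. by move/S3E: Sa => a1; rewrite chart_v_RQQ qnorm2M a1 mul1r. Qed.

Lemma chart_v_gt0 : 0 < qnorm2 (chart_v (RQQ a b)).
Proof.
move/S3E: Sb => b1; rewrite qnorm2_chart_v qnorm2_vscale tilt_RQQ b1.
apply: tilt_norm_gt0; rewrite -b1 /qnorm2 -!addrA lerDl.
by rewrite !addr_ge0 ?sqr_ge0.
Qed.

Lemma chart_RQQ_S3 : S3 R (chart (RQQ a b)).1 /\ S3 R (chart (RQQ a b)).2.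
Proof.
move/S3E: Sb => b1; split; apply: S3_normalize chart_v_gt0 _ => //.
by rewrite chart_w_RQQ qnorm2M qnorm2_conj b1 mulr1 qnorm2_chart_v.
Qed.

Lemma chart_RQQ :
  4^-1 <= qco b 0 ^+ 2 -> RQQ (chart (RQQ a b)).1 (chart (RQQ a b)).2 = RQQ a b.
Proof.
move=> b4; have t0 : tilt (RQQ a b) = 0 by rewrite tilt_RQQ max_r // subr_le0.
have c0 : vscale 0 b = qco b 0 *: 'q_0 by apply: quatP; rewrite /vscale; qcoords; ring.
have cb : qmul (qconj (qco b 0 *: 'q_0)) b = qco b 0 *: b.
  by apply: quatP; rewrite /qconj; qcoords; ring.
have v : chart_v (RQQ a b) = qco b 0 *: a by rewrite chart_v_RQQ t0 c0 qmulZr mulq1.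
have w : chart_w (RQQ a b) = qco b 0 *: b by rewrite chart_w_RQQ t0 c0 cb.
have b0 : qco b 0 != 0 by rewrite -sqrf_eq0 gt_eqF // (lt_le_trans _ b4).
move/S3E: Sa => a1; rewrite /chart /= v w qnorm2Z a1 mulr1 sqrtr_sqr !scalerA RQQZ.
by rewrite -expr2 exprMn exprVn real_normK ?num_real // mulVf ?sqrf_eq0 // scale1r.
Qed.

End ChartOfRQQ.

(** * Continuity of the chart *)

Section Continuity.
Variables (T : topologicalType) (x : T).
Implicit Types (f g : T -> R) (F G : T -> 'rV[R]_4).

Lemma cont_add (V : normedModType R) (f g : T -> V) :
  {for x, continuous f} -> {for x, continuous g} -> {for x, continuous (fun z => f z + g z)}.
Proof. exact: continuousD. Qed.

Lemma cont_mul f g :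
  {for x, continuous f} -> {for x, continuous g} -> {for x, continuous (fun z => f z * g z)}.
Proof. exact: continuousM. Qed.

Lemma cont_sqr f : {for x, continuous f} -> {for x, continuous (fun z => f z ^+ 2)}.
Proof. by move=> cf; apply: cont_mul. Qed.

Lemma cont_max f g : {for x, continuous f} -> {for x, continuous g} ->
  {for x, continuous (fun z => Num.max (f z) (g z))}.
Proof. exact: continuous_max. Qed.

Lemma cont_qco F k : {for x, continuous F} -> {for x, continuous (fun z => qco (F z) k)}.
Proof. by move=> cF; exact: (continuous_comp cF (@coord_continuous R 1 4 0 (inord k) (F x))). Qed.

Lemma quat_sum (x0 x1 x2 x3 : R) :
  quat x0 x1 x2 x3 = x0 *: 'q_0 + x1 *: 'q_1 + x2 *: 'q_2 + x3 *: 'q_3.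
Proof. by apply: quatP; qcoords; ring. Qed.

Lemma cont_quat f0 f1 f2 f3 :
  {for x, continuous f0} -> {for x, continuous f1} -> {for x, continuous f2} ->
  {for x, continuous f3} -> {for x, continuous (fun z => quat (f0 z) (f1 z) (f2 z) (f3 z))}.
Proof.
move=> c0 c1 c2 c3.
have -> : (fun z => quat (f0 z) (f1 z) (f2 z) (f3 z)) =
    (fun z => f0 z *: 'q_0 + f1 z *: 'q_1 + f2 z *: 'q_2 + f3 z *: 'q_3).
  by apply/funext => z; rewrite quat_sum.
by apply: cont_add; [apply: cont_add; [apply: cont_add|]|];
  apply: continuousZ; first [assumption | exact: cst_continuous].
Qed.

Ltac cont_step :=
  match goal with
  | |- prop_for _ (inPhantom (continuous (fun z => @?f z + @?g z))) =>
      refine (cont_add (f := f) (g := g) _ _)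
  | |- prop_for _ (inPhantom (continuous (fun z => @?f z * @?g z))) =>
      refine (cont_mul (f := f) (g := g) _ _)
  | |- prop_for _ (inPhantom (continuous (fun z => (@?f z) ^+ 2))) =>
      refine (cont_sqr (f := f) _)
  | |- prop_for _ (inPhantom (continuous (fun z => - @?f z))) =>
      refine (continuousN (f := f) _)
  | |- prop_for _ (inPhantom (continuous (fun z => @?f z *: @?g z))) =>
      refine (continuousZ (s := f) (f := g) _ _)
  | |- prop_for _ (inPhantom (continuous (fun z => Num.max (@?f z) (@?g z)))) =>
      refine (cont_max (f := f) (g := g) _ _)
  | |- prop_for _ (inPhantom (continuous (fun z => qco (@?F z) ?k))) =>
      refine (cont_qco (F := F) (k := k) _)
  | |- prop_for _ (inPhantom (continuous (fun z => quat (@?f0 z) (@?f1 z) (@?f2 z) (@?f3 z)))) =>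
      refine (cont_quat (f0 := f0) (f1 := f1) (f2 := f2) (f3 := f3) _ _ _ _)
  | |- prop_for _ (inPhantom (continuous (fun _ => _))) => exact: cst_continuous
  end.

Ltac cont leaf := repeat (cont_step || (cbv beta; cont_step) || leaf).

Lemma cont_qmul F G : {for x, continuous F} -> {for x, continuous G} ->
  {for x, continuous (fun z => qmul (F z) (G z))}.
Proof.
move=> cF cG; have -> : (fun z => qmul (F z) (G z)) = _ := funext (fun z => qmulE (F z) (G z)).
by cont ltac:(first [exact: cF | exact: cG]).
Qed.

Lemma cont_qconj F : {for x, continuous F} -> {for x, continuous (fun z => qconj (F z))}.
Proof. by move=> cF; rewrite /qconj; cont ltac:(exact: cF). Qed.

Lemma cont_qnorm2 F : {for x, continuous F} -> {for x, continuous (fun z => qnorm2 (F z))}.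
Proof. by move=> cF; rewrite /qnorm2; cont ltac:(exact: cF). Qed.

Ltac cont_step_q := first [cont_step |
  match goal with
  | |- prop_for _ (inPhantom (continuous (fun z => qmul (@?F z) (@?G z)))) =>
      refine (cont_qmul (F := F) (G := G) _ _)
  | |- prop_for _ (inPhantom (continuous (fun z => qnorm2 (@?F z)))) =>
      refine (cont_qnorm2 (F := F) _)
  end].

Ltac contq leaf := repeat (cont_step_q || (cbv beta; cont_step_q) || leaf).

Lemma cont_col (F : T -> 'M[R]_4) j : (forall i j, {for x, continuous (fun z => F z i j)}) ->
  {for x, continuous (fun z => (col j (F z))^T)}.
Proof.
move=> cF; have -> : (fun z => (col j (F z))^T) = (fun z => quat (F z (inord 0) j)
    (F z (inord 1) j) (F z (inord 2) j) (F z (inord 3) j)).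
  by apply/funext => z; rewrite [LHS]quat_eta /qco !mxE.
exact: cont_quat.
Qed.

Lemma continuous_chart (F : T -> 'M[R]_4) :
  (forall i j, {for x, continuous (fun z => F z i j)}) -> 0 < qnorm2 (chart_v (F x)) ->
  {for x, continuous (fun z => (chart (F z)).1)} /\ {for x, continuous (fun z => (chart (F z)).2)}.
Proof.
move=> cF v0.
have cK k l : {for x, continuous (fun z => assoc (F z) k l)}.
  by case: k => [|[|[|[|k]]]]; case: l => [|[|[|[|l]]]]; rewrite /assoc; cont ltac:(exact: cF).
have cA l : {for x, continuous (fun z => assoc_col (F z) l)}.
  by rewrite /assoc_col; cont ltac:(exact: cK).
have cv : {for x, continuous (fun z => chart_v (F z))}.
  by rewrite /chart_v /tilt; contq ltac:(exact: cA).
have cw : {for x, continuous (fun z => chart_w (F z))}.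
  by apply: cont_qmul; [apply: cont_qconj | exact: cont_col].
have cs : {for x, continuous (fun z => (Num.sqrt (qnorm2 (chart_v (F z))))^-1)}.
  apply: continuousV; first by rewrite sqrtr_eq0 -ltNge.
  apply: (continuous_comp (f := fun z => qnorm2 (chart_v (F z)))); last exact: sqrt_continuous.
  exact: cont_qnorm2.
by split; apply: continuousZ.
Qed.

End Continuity.

(** * The four charts *)

Definition rot_chart (i : 'I_4) M : 'rV[R]_4 * 'rV[R]_4 :=
  let c := chart (RQQ 'q_0 (qconj (qe R i)) *m M) in (c.1, qmul c.2 (qe R i)).

Lemma RQQ_shift (i : 'I_4) a b :
  RQQ 'q_0 (qconj (qe R i)) *m RQQ a b = RQQ a (qmul b (qconj (qe R i))).
Proof. by rewrite RQQ_mul mul1q. Qed.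

Lemma RQQ_unshift (i : 'I_4) x y M : RQQ x y = RQQ 'q_0 (qconj (qe R i)) *m M ->
  RQQ x (qmul y (qe R i)) = M.
Proof.
move=> xyM; rewrite -[x]mul1q -RQQ_mul xyM mulmxA RQQ_mul mul1q.
by rewrite qmul_conjl qnorm2_qe scale1r RQQ1 mul1mx.
Qed.

Lemma continuous_mulmx_entries (A : 'M[R]_4) M i j :
  {for M, continuous (fun N : 'M[R]_4 => (A *m N) i j)}.
Proof.
have -> : (fun N : 'M[R]_4 => (A *m N) i j) = (fun N => A i (inord 0) * N (inord 0) j +
    A i (inord 1) * N (inord 1) j + A i (inord 2) * N (inord 2) j + A i (inord 3) * N (inord 3) j).
  by apply/funext => N; rewrite mxE sum4.
apply: cont_add; [apply: cont_add; [apply: cont_add|]|];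
  apply: cont_mul; first [exact: cst_continuous | exact: coord_continuous].
Qed.

Lemma continuous_rot_chart (i : 'I_4) M : SO4 R M -> {for M, continuous (rot_chart i)}.
Proof.
case/SO4_RQQ_surj => a [b [Sa Sb abM]].
have Sbi := S3_mul Sb (S3_conj (S3_qe i)).
have v0 : 0 < qnorm2 (chart_v (RQQ 'q_0 (qconj (qe R i)) *m M)).
  by rewrite -abM RQQ_shift; exact: chart_v_gt0.
have [c1 c2] := continuous_chart (fun i j => @continuous_mulmx_entries _ M i j) v0.
have -> : rot_chart i = fun N => let c := chart (RQQ 'q_0 (qconj (qe R i)) *m N) in
    (c.1, qmul c.2 (qe R i)) by [].
exact: (cvg_pair c1 (cont_qmul c2 (@cst_continuous _ _ (qe R i) M))).
Qed.

Lemma SO4_rot_chart_S3 (i : 'I_4) M :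
  SO4 R M -> S3 R (rot_chart i M).1 /\ S3 R (rot_chart i M).2.
Proof.
case/SO4_RQQ_surj => a [b [Sa Sb <-]]; rewrite /rot_chart RQQ_shift /=.
have [S1 S2] := chart_RQQ_S3 Sa (S3_mul Sb (S3_conj (S3_qe i))).
by split => //; apply: S3_mul => //; exact: S3_qe.
Qed.

Lemma SO4_rot_chart_cover M : SO4 R M -> exists i, RQQ (rot_chart i M).1 (rot_chart i M).2 = M.
Proof.
move=> HM; have [a [b [Sa Sb abM]]] := SO4_RQQ_surj HM.
have [i bi] : exists i : 'I_4, 4^-1 <= qco b i ^+ 2.
  move/S3E: Sb; rewrite /qnorm2 => b1.
  have [b0|b0] := lerP 4^-1 (qco b 0 ^+ 2); first by exists (inord 0); rewrite inordK.
  have [b1'|b1'] := lerP 4^-1 (qco b 1 ^+ 2); first by exists (inord 1); rewrite inordK.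
  have [b2|b2] := lerP 4^-1 (qco b 2 ^+ 2); first by exists (inord 2); rewrite inordK.
  by exists (inord 3); rewrite inordK //; lra.
exists i; apply: RQQ_unshift; rewrite /rot_chart /= -abM RQQ_shift.
by rewrite chart_RQQ ?qco0_mul_conj_qe //; apply: S3_mul Sb (S3_conj (S3_qe i)).
Qed.

End SO4Charts.

Theorem theorem14 (R : realType) :
  exists g : 'I_4 -> 'M[R]_4 -> 'rV[R]_4 * 'rV[R]_4,
    (forall i : 'I_4, {within SO4 R, continuous (g i)}) /\
    (forall (i : 'I_4) (M : 'M[R]_4), SO4 R M -> S3 R (g i M).1 /\ S3 R (g i M).2) /\
    (forall M : 'M[R]_4, SO4 R M -> exists i : 'I_4, RQQ (g i M).1 (g i M).2 = M).
Proof.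
exists (@rot_chart R); split; [|split].
- move=> i; apply: continuous_in_subspaceT => M; rewrite inE.
  exact: continuous_rot_chart.
- exact: SO4_rot_chart_S3.
- exact: SO4_rot_chart_cover.
Qed.
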